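(* There exists an instance with two agents $N=\{1,2\}$ and a finite item set $A$ with no externalities (i.e., $V_i(j,a)=0$ for all $a\in A$ and $i\ne j$) together with a complete allocation that is envy-free but does not satisfy PROP-Max.
   Context: Setting: agents $N=\{1,\dots,n\}$, finite item set $A$; a complete allocation $\pi$ partitions $A$ into bundles $\pi_1,\dots,\pi_n$; $\pi(a)$ is the agent receiving $a$; $V_i(j,a)\in\mathbb{R}$ is agent $i$'s value when item $a$ goes to agent $j$; $V_i(\pi)=\sum_{a\in A}V_i(\pi(a),a)$. $\pi^{i\leftrightarrow j}$ is $\pi$ with bundles of $i$ and $j$ swapped. $\pi$ is envy-free (EF) if there are no agents $i,j$ with $V_i(\pi^{i\leftrightarrow j})>V_i(\pi)$. With $V_i^{max}(a)=\max_{j\in N}V_i(j,a)$, $\pi$ satisfies PROP-Max if $V_i(\pi)\ge\frac1n\sum_{a\in A}V_i^{max}(a)$ for all $i\in N$. *)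

From mathcomp Require Import all_boot all_order all_algebra.
From mathcomp Require Import Rstruct.
From Stdlib Require Import Reals.
Set Implicit Arguments. Unset Strict Implicit. Unset Printing Implicit Defensive.
Import Order.TTheory GRing.Theory Num.Theory.
Local Open Scope ring_scope.

(* A valuation V : agent -> agent -> item -> R, V i j a = value to agent i
   when item a is given to agent j.
   A complete allocation is a function pi : A -> 'I_n (pi a = recipient);
   bundle of j is [set a | pi a == j]. *)

Definition valuation (n : nat) (A : finType) := 'I_n -> 'I_n -> A -> R.
Definition allocation (n : nat) (A : finType) := A -> 'I_n.

Definition value n (A : finType) (V : valuation n A) (i : 'I_n)
  (pi : allocation n A) : R :=
  \sum_(a : A) V i (pi a) a.

Definition swap_alloc n (A : finType) (pi : allocation n A) (i j : 'I_n)
  : allocation n A :=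
  fun a => if pi a == i then j else if pi a == j then i else pi a.

Definition envy_free n (A : finType) (V : valuation n A) (pi : allocation n A)
  : Prop :=
  forall i j : 'I_n, ~ (value V i pi < value V i (swap_alloc pi i j)).

Definition Vmax n (A : finType) (V : valuation n A) (i : 'I_n) (a : A) : R :=
  \big[Num.max/V i i a]_(j < n) V i j a.

Definition prop_max n (A : finType) (V : valuation n A) (pi : allocation n A)
  : Prop :=
  forall i : 'I_n, (n%:R)^-1 * (\sum_(a : A) Vmax V i a) <= value V i pi.

Definition no_externalities n (A : finType) (V : valuation n A) : Prop :=
  forall (i j : 'I_n) (a : A), i != j -> V i j a = 0.

From mathcomp Require Import all_boot all_order all_algebra.
From mathcomp Require Import Rstruct lra.
From Stdlib Require Import Reals.
Set Implicit Arguments. Unset Strict Implicit. Unset Printing Implicit Defensive.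
Import Order.TTheory GRing.Theory Num.Theory.
Local Open Scope ring_scope.

(* Without externalities an agent only values her own bundle, so envy-freeness
   compares own-valuations of bundles, while PROP-Max asks for a [1/n] share of
   the positive parts of those own-valuations.  Give both items to agent 0, who
   values them at [+1] and [-1]: her bundle is worth [0], exactly as much as the
   empty bundle of agent 1, yet her PROP-Max share is [1/2]. *)

Section NoExternalities.

Variables (n : nat) (A : finType) (V : valuation n A).
Hypothesis noextV : no_externalities V.

Lemma value_no_externalities (pi : allocation n A) (i : 'I_n) :
  value V i pi = \sum_(a | pi a == i) V i i a.
Proof.
rewrite /value (bigID (fun a => pi a == i)) /=.
rewrite [X in _ + X]big1 ?addr0 => [|a /negPf nai]; last first.
  by rewrite noextV // eq_sym nai.
by apply: eq_bigr => a /eqP ->.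
Qed.

Lemma swap_alloc_eq (pi : allocation n A) (i j : 'I_n) (a : A) :
  (swap_alloc pi i j a == i) = (pi a == j).
Proof.
rewrite /swap_alloc; case: (eqVneq (pi a) i) => [->|nai]; first by rewrite eq_sym.
by case: (eqVneq (pi a) j) => _; rewrite ?eqxx ?(negPf nai).
Qed.

Lemma value_swap_no_externalities (pi : allocation n A) (i j : 'I_n) :
  value V i (swap_alloc pi i j) = \sum_(a | pi a == j) V i i a.
Proof.
by rewrite value_no_externalities; apply: eq_bigl => a; rewrite swap_alloc_eq.
Qed.

Lemma envy_free_no_externalities (pi : allocation n A) :
  envy_free V pi <->
  forall i j, \sum_(a | pi a == j) V i i a <= \sum_(a | pi a == i) V i i a.
Proof.
split=> EF i j; have := EF i j;
  rewrite value_swap_no_externalities value_no_externalities.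
- by rewrite leNgt => /negP.
- by rewrite ltNge => ->.
Qed.

Lemma Vmax_no_externalities (i : 'I_n) (a : A) :
  (1 < n)%nat -> Vmax V i a = Num.max (V i i a) 0.
Proof.
move=> n_gt1; have /card_gt0P[j /[!inE] ji] : (0 < #|predC1 i|)%nat.
  by rewrite cardC1 card_ord -subn1 subn_gt0.
apply: le_anti; rewrite ge_max bigmax_ge_id /=; apply/andP; split.
- apply: bigmax_le => [|k _]; first by rewrite le_max lexx.
  by case: (eqVneq k i) => [->|ki]; rewrite le_max ?lexx // noextV 1?eq_sym // lexx orbT.
- by rewrite -(noextV a (_ : i != j)) 1?eq_sym // le_bigmax.
Qed.

Lemma prop_max_no_externalities (pi : allocation n A) :
  (1 < n)%nat ->
  prop_max V pi <->
  forall i, n%:R^-1 * \sum_a Num.max (V i i a) 0 <= \sum_(a | pi a == i) V i i a.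
Proof.
move=> n_gt1; have sumVmaxE i : \sum_a Vmax V i a = \sum_a Num.max (V i i a) 0.
  by apply: eq_bigr => a _; apply: Vmax_no_externalities.
by split=> PM i; have := PM i; rewrite value_no_externalities sumVmaxE.
Qed.

End NoExternalities.

Definition own_valuation n (A : finType) (u : 'I_n -> A -> R) : valuation n A :=
  fun i j a => if i == j then u i a else 0.

Lemma own_valuation_no_externalities n (A : finType) (u : 'I_n -> A -> R) :
  no_externalities (own_valuation u).
Proof. by move=> i j a /negPf ij; rewrite /own_valuation ij. Qed.

Definition good_and_bad_item : 'I_2 -> bool -> R :=
  fun i a => if i == ord0 then (if a then 1 else -1) else 0.

Theorem proposition1 :
  exists (A : finType) (V : valuation 2 A) (pi : allocation 2 A),
    no_externalities V /\ envy_free V pi /\ ~ prop_max V pi.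
Proof.
pose V := own_valuation good_and_bad_item.
have noextV : no_externalities V := own_valuation_no_externalities _.
exists bool, V, (fun _ => ord0); split=> //; split.
- apply/(envy_free_no_externalities noextV) => i j.
  rewrite /V /own_valuation /good_and_bad_item eqxx.
  case: i => [[|[|//]] ?]; case: j => [[|[|//]] ?];
    by rewrite ?big1_eq ?big_mkcond ?big_bool /=; lra.
- move/(prop_max_no_externalities noextV _ isT)/(_ ord0).
  rewrite /V /own_valuation /good_and_bad_item eqxx !big_bool /=.
  rewrite (max_l ler01) (max_r (lerN10 _)) addr0 subrr mulr1.
  by rewrite leNgt invr_gt0 ltr0n.
Qed.
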